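(* Let $N\ge1$, $k\in\{1,\dots,N\}$, $\mathcal{I}_k:=\big((N-2k)\frac{\pi}{2},(N-2(k-1))\frac{\pi}{2}\big)$, and $G(A):=\sum_{i=1}^N\arctan(\lambda_i(A))$ for $A\in\mathcal{S}(N)$. For every compact set $\Sigma\subset\mathcal{I}_k$ there exists $C=C(\Sigma)>0$ such that every $A\in\mathcal{S}(N)$ with $G(A)\in\Sigma$ satisfies $|\lambda_j(A)|\le C$ for some $j=j_A\in\{1,\dots,N\}$.
   Context: $\mathcal{S}(N)$ is the space of real symmetric $N\times N$ matrices and $\lambda_1(A)\le\dots\le\lambda_N(A)$ are the eigenvalues of $A$. *)

From HB Require Import structures.
From mathcomp Require Import all_boot all_order all_algebra.
From mathcomp Require Import all_classical all_reals all_analysis.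
Set Implicit Arguments. Unset Strict Implicit. Unset Printing Implicit Defensive.
Import Order.TTheory GRing.Theory Num.Theory.
Local Open Scope ring_scope.

Definition is_eigen_seq (R : realType) (N : nat) (A : 'M[R]_N) (s : seq R) :=
  [/\ size s = N, sorted <=%R s & char_poly A = \prod_(x <- s) ('X - x%:P)].

(* The (sorted) eigenvalue list of A; for real symmetric A it exists by the
   spectral theorem, the default [nseq N 0] is never used for such A. *)
Definition eigvals (R : realType) (N : nat) (A : 'M[R]_N) : seq R :=
  match pselect (exists s, is_eigen_seq A s) with
  | left h => projT1 (cid h)
  | right _ => nseq N 0
  end.

(* lambda_{i+1}(A) for i : 'I_N (0-based index). *)
Definition eigval (R : realType) (N : nat) (A : 'M[R]_N) (i : 'I_N) : R :=
  nth 0 (eigvals A) i.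

Definition Gfun (R : realType) (N : nat) (A : 'M[R]_N) : R :=
  \sum_(i < N) atan (eigval A i).

Definition Ik (R : realType) (N k : nat) : set R :=
  `](N%:R - 2 * k%:R) * (pi / 2), (N%:R - 2 * (k%:R - 1)) * (pi / 2)[%classic.

From HB Require Import structures.
From mathcomp Require Import all_boot all_order all_algebra.
From mathcomp Require Import all_classical all_reals all_analysis.
From mathcomp Require Import lra.
Set Implicit Arguments. Unset Strict Implicit. Unset Printing Implicit Defensive.
Import Order.TTheory GRing.Theory Num.Theory.
Local Open Scope ring_scope.
Local Open Scope classical_set_scope.
Import numFieldNormedType.Exports.

(* If every eigenvalue satisfies |lambda_i| > tan (pi/2 - e), then each
   arctan lambda_i lies within e of +pi/2 or -pi/2, so G(A) lies within N e
   of (N - 2m) pi/2, m being the number of negative eigenvalues.  These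
   points are exactly the endpoints of the intervals I_k, whereas a compact
   subset of the open interval I_k keeps a positive distance d from them;
   taking N e < d gives a contradiction. *)

Lemma compact_subset_itv_oo_margin (R : realType) (a b : R) (S : set R) :
  compact S -> S `<=` `]a, b[%classic ->
  exists2 d : R, 0 < d & forall x, S x -> a + d <= x <= b - d.
Proof.
move=> cS sSab; have [S0|/set0P Sne] := eqVneq S set0.
  by exists 1 => // x; rewrite S0.
have cid : {within S, continuous (fun x : R => x)}.
  by apply: continuous_subspaceT => x; exact: cvg_id.
have [m /set_mem Sm minS] := compact_EVT_min Sne cS cid.
have [M /set_mem SM maxS] := compact_EVT_max Sne cS cid.
have /sSab/= := Sm; rewrite in_itv /= => /andP[am _].
have /sSab/= := SM; rewrite in_itv /= => /andP[_ Mb].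
exists (Num.min (m - a) (b - M)); first by rewrite lt_min !subr_gt0 am Mb.
move=> x Sx; have /minS mx := mem_set Sx; have /maxS xM := mem_set Sx.
have d1 : Num.min (m - a) (b - M) <= m - a by rewrite ge_min lexx.
have d2 : Num.min (m - a) (b - M) <= b - M by rewrite ge_min lexx orbT.
apply/andP; split; lra.
Qed.

Lemma sumr_sign_card (R : pzRingType) (I : finType) (P : pred I) :
  \sum_(i : I) (-1) ^+ P i = #|I|%:R - 2 * #|P|%:R :> R.
Proof.
rewrite (bigID P) /= (eq_bigr (fun=> -1)); last by move=> i ->.
rewrite [X in _ + X](eq_bigr (fun=> 1)); last by move=> i /negbTE ->.
rewrite !sumr_const -(cardC P) natrD mulNrn mulr_natl mulr2n.
by rewrite opprD addrACA subrr add0r addrC.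
Qed.

Lemma atan_near_signed_pi2 (R : realType) (e x : R) :
  0 < e -> tan (pi / 2 - e) < `|x| ->
  `|atan x - (-1) ^+ (x < 0)%R * (pi / 2)| < e.
Proof.
move=> e0 hx; have ltpi2 := atan_ltpi2 x; have gtNpi2 := atan_gtNpi2 x.
have pi0 : 0 < pi :> R := pi_gt0 R.
have [lt_e_pi|le_pi_e] := ltP e pi; last first.
  by case: (x < 0); rewrite ?expr1 ?expr0 ?mulN1r ?mul1r ltr_norml; lra.
have atan_gt y : tan (pi / 2 - e) < y -> pi / 2 - e < atan y.
  move=> /lt_atan; rewrite tanK // in_itv /=; apply/andP; split; lra.
have [xneg|xpos] := ltP x 0.
  rewrite ltr0_norm // in hx; have := atan_gt _ hx; rewrite atanN.
  by rewrite expr1 mulN1r ltr_norml; lra.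
rewrite ger0_norm // in hx; have := atan_gt _ hx.
by rewrite expr0 mul1r ltr_norml; lra.
Qed.

Lemma sum_atan_near_half_pi_multiple (R : realType) (I : finType)
    (x : I -> R) (e : R) :
  0 < e -> (forall i, tan (pi / 2 - e) < `|x i|) ->
  `|\sum_i atan (x i) - (#|I|%:R - 2 * #|[pred i | x i < 0]|%:R) * (pi / 2)|
    <= #|I|%:R * e.
Proof.
move=> e0 large.
rewrite -(sumr_sign_card R [pred i | x i < 0]) mulr_suml -sumrB.
apply: le_trans (ler_norm_sum _ _ _) _.
have -> : #|I|%:R * e = \sum_(i : I) e by rewrite sumr_const mulr_natl.
by apply: ler_sum => i _; apply: ltW; exact: atan_near_signed_pi2.
Qed.

Lemma far_from_odd_multiples (R : realDomainType) (N k m : nat) (h d x : R) :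
  0 <= h ->
  (N%:R - 2 * k%:R) * h + d <= x <= (N%:R - 2 * (k%:R - 1)) * h - d ->
  d <= `|x - (N%:R - 2 * m%:R) * h|.
Proof.
move=> h0 /andP[lox hix].
have [km|mk] := leqP k m.
  have : (N%:R - 2 * m%:R) * h <= (N%:R - 2 * k%:R) * h.
    by rewrite ler_wpM2r // lerD2l lerN2 ler_wpM2l // ler_nat.
  by rewrite ler_normr; lra.
have : (N%:R - 2 * (k%:R - 1)) * h <= (N%:R - 2 * m%:R) * h.
  rewrite ler_wpM2r //.
  have : (m + 1)%:R <= k%:R :> R by rewrite ler_nat addn1.
  by rewrite natrD; lra.
by rewrite ler_normr; lra.
Qed.

Theorem lemma6p19 (R : realType) (N k : nat) (Sigma : set R) :
  (1 <= N)%N -> (1 <= k <= N)%N ->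
  @compact (Num.NumDomain.sort R) Sigma -> Sigma `<=` @Ik R N k ->
  exists C : R, 0 < C /\
    forall A : 'M[R]_N, A^T = A -> Sigma (Gfun A) ->
      exists j : 'I_N, `|eigval A j| <= C.
Proof.
move=> _ _ cS sSI.
have [d d0 margin] := compact_subset_itv_oo_margin cS sSI.
pose e := d / N.+1%:R.
have e0 : 0 < e by rewrite divr_gt0 ?ltr0n.
have Ne_lt_d : N%:R * e < d.
  by rewrite mulrA ltr_pdivrMr ?ltr0n // mulrC ltr_pM2l // ltr_nat.
exists (1 + `|tan (pi / 2 - e)|); split; first by rewrite ltr_pwDl ?normr_ge0.
move=> A _ /margin SG; apply: contrapT => /forallNP small.
have large i : tan (pi / 2 - e) < `|eigval A i|.
  have := small i; rewrite leNgt => /negP; rewrite negbK.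
  by apply: le_lt_trans; rewrite (le_trans (ler_norm _)) // lerDr.
have := sum_atan_near_half_pi_multiple e0 large; rewrite card_ord => near.
have pi2_ge0 : 0 <= pi / 2 :> R by rewrite divr_ge0 ?(ltW (pi_gt0 R)).
have far := far_from_odd_multiples #|[pred i | eigval A i < 0]| pi2_ge0 SG.
by have := le_lt_trans (le_trans far near) Ne_lt_d; rewrite ltxx.
Qed.
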